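(* Let $R$ be $\mathbb{Z}$ or $\mathbb{Z}/m\mathbb{Z}$ with $m\ge2$, let $\Lambda$ be a free abelian group with basis $x_1,\ldots,x_n$, and let $\vec q=(q_1,\ldots,q_n)$ be an $n$-tuple in $R[\Lambda]$ satisfying the generalized flatness condition. Then every syzygy of $\vec q$ is trivial.
   Context: $R[\Lambda]$ is identified with $R[x_1^{\pm1},\ldots,x_n^{\pm1}]$; $\Lambda_i=\langle x_1,\ldots,x_i\rangle$. A polynomial $p\in R[\Lambda_i]$ is a divisor with respect to $x_i$ if, writing $p=p_kx_i^k+\cdots+p_mx_i^m$ with $p_j\in R[\Lambda_{i-1}]$ and $p_k\ne0$, $p_k$ is a monic monomial in $x_1,\ldots,x_{i-1}$. $(r_1,\ldots,r_n)$ satisfies the flatness condition if $r_i\in R[\Lambda_i]$ and $r_i$ is a divisor with respect to $x_i$ for all $i$; $\vec q$ satisfies the generalized flatness condition if $\vec qA$ satisfies the flatness condition for some $A\in GL_n(R[\Lambda])$. A syzygy of $\vec q$ is $(f_1,\ldots,f_n)\in R[\Lambda]^n$ with $\sum_if_iq_i=0$; it is trivial if it lies in the $R[\Lambda]$-submodule generated by the vectors $S_{ij}$ ($i\ne j$) having $q_j$ in position $i$, $-q_i$ in position $j$, and $0$ elsewhere. *)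

From HB Require Import structures.
From mathcomp Require Import all_boot all_order all_algebra.
From mathcomp.multinomials Require Export freeg.

Set Implicit Arguments.
Unset Strict Implicit.
Unset Printing Implicit Defensive.

Import Order.TTheory GRing.Theory Num.Theory.
Local Open Scope ring_scope.

(* The group ring R[Lambda] of Lambda = Z^n (free abelian group with basis
   x_1,...,x_n), i.e. the Laurent polynomial ring R[x_1^{+-1},...,x_n^{+-1}]:
   finite formal R-linear combinations of monomials x^e, e : 'rV[int]_n.
   The monomial x^e is << e >>, and [coeff e p] is the coefficient of x^e in p.
   Variable x_{i+1} of the paper corresponds to the index i : 'I_n. *)
Definition laurent (R : nzRingType) (n : nat) := {freeg 'rV[int]_n / R}.

Section Laurent.
Variables (R : comNzRingType) (n : nat).
Local Notation L := (laurent R n).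

Definition lmono (e : 'rV[int]_n) : L := << e >>.

Definition lone : L := lmono 0.

Definition lmul (p q : L) : L :=
  fglift (fun e : 'rV[int]_n => fglift (fun f : 'rV[int]_n => lmono (e + f)) q) p.

(* p lies in R[Lambda_k], Lambda_k = <x_1,...,x_k>: every monomial occurring
   in p involves only x_1, ..., x_k (exponents of x_{j+1}, j >= k, vanish). *)
Definition in_sub (k : nat) (p : L) : Prop :=
  forall e : 'rV[int]_n, coeff e p != 0 ->
    forall j : 'I_n, (k <= j)%N -> e 0 j = 0.

(* p in R[Lambda_{i+1}] is a divisor with respect to x_{i+1}:
   writing p = p_k x_{i+1}^k + ... + p_m x_{i+1}^m with p_j in R[Lambda_i]
   and p_k <> 0, the lowest coefficient p_k is a monic monomial x^d
   (d in Lambda_i). *)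
Definition divisor (i : 'I_n) (p : L) : Prop :=
  exists (k : int) (d : 'rV[int]_n),
    [/\ d 0 i = k,
        (forall j : 'I_n, (i < j)%N -> d 0 j = 0),
        (forall e : 'rV[int]_n, coeff e p != 0 -> k <= e 0 i) &
        (forall e : 'rV[int]_n, e 0 i = k -> coeff e p = (e == d)%:R)].

Definition flat (r : 'I_n -> L) : Prop :=
  forall i : 'I_n, in_sub i.+1 (r i) /\ divisor i (r i).

Definition mx_inverse (A B : 'I_n -> 'I_n -> L) : Prop :=
  forall i j : 'I_n,
    \sum_(k < n) lmul (A i k) (B k j) = (if i == j then lone else 0) /\
    \sum_(k < n) lmul (B i k) (A k j) = (if i == j then lone else 0).

Definition vecmul (q : 'I_n -> L) (A : 'I_n -> 'I_n -> L) : 'I_n -> L :=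
  fun j => \sum_(i < n) lmul (q i) (A i j).

Definition gen_flat (q : 'I_n -> L) : Prop :=
  exists A B : 'I_n -> 'I_n -> L, mx_inverse A B /\ flat (vecmul q A).

Definition syzygy (q f : 'I_n -> L) : Prop :=
  \sum_(i < n) lmul (f i) (q i) = 0.

Definition Svec (q : 'I_n -> L) (i j : 'I_n) : 'I_n -> L :=
  fun k => if k == i then q j else if k == j then - q i else 0.

Definition trivial_syzygy (q f : 'I_n -> L) : Prop :=
  exists c : 'I_n -> 'I_n -> L,
    forall k : 'I_n,
      f k = \sum_(i < n) \sum_(j < n | i != j) lmul (c i j) (Svec q i j k).

End Laurent.

From HB Require Import structures.
From mathcomp Require Import all_boot all_order all_algebra.
From mathcomp.multinomials Require Import freeg.
From mathcomp Require Import zify ring.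

Set Implicit Arguments.
Unset Strict Implicit.
Unset Printing Implicit Defensive.

Import Order.TTheory GRing.Theory Num.Theory.
Local Open Scope ring_scope.

(* Replacing q by r = qA with A invertible transports syzygies and Koszul
   (i.e. trivial) syzygies back and forth, so we may assume q = r is flat.
   A flat r is a regular sequence: the ideal I_k = (r_1, ..., r_{k-1}) is
   homogeneous for the grading by the exponents of x_k, ..., x_n, because its
   generators only involve x_1, ..., x_{k-1}; if g r_k lies in I_k, the
   component of g r_k of lowest x_k-degree is (component of g) * x^d, where
   x^d is the lowest x_k-part of r_k, so that component of g lies in I_k and
   induction on the support of g applies.  For a regular sequence every
   syzygy is Koszul, by induction on the last nonzero coordinate. *)

Lemma seq_argmin (disp : Order.disp_t) (U : orderType disp) (T : eqType)
    (s : seq T) (phi : T -> U) :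
  s != [::] -> exists2 x, x \in s & forall y, y \in s -> (phi x <= phi y)%O.
Proof.
elim: s => [//|a s IHs] _.
have [->|/IHs [b b_s min_b]] := eqVneq s [::].
  by exists a => [|y]; rewrite ?mem_head // inE => /eqP ->.
have [le_ab|lt_ba] := leP (phi a) (phi b).
  exists a => [|y]; first exact: mem_head.
  by rewrite inE => /orP [/eqP -> // | /min_b]; apply: le_trans.
exists b => [|y]; first by rewrite inE b_s orbT.
by rewrite inE => /orP [/eqP -> | /min_b //]; apply: ltW.
Qed.

Section Koszul.
Variables (T : comNzRingType) (n : nat).
Implicit Types (q r f g : 'I_n -> T) (a p : T).

Definition in_ideal r (k : nat) p :=
  exists h : 'I_n -> T, p = \sum_(i < n | (i < k)%N) h i * r i.

Lemma in_ideal0 r k : in_ideal r k 0.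
Proof. by exists (fun=> 0); rewrite big1 // => i _; rewrite mul0r. Qed.

Lemma in_idealD r k p1 p2 :
  in_ideal r k p1 -> in_ideal r k p2 -> in_ideal r k (p1 + p2).
Proof.
move=> [h1 ->] [h2 ->]; exists (fun i => h1 i + h2 i).
by rewrite -big_split; apply: eq_bigr => i _; rewrite mulrDl.
Qed.

Lemma in_idealMl r k a p : in_ideal r k p -> in_ideal r k (a * p).
Proof.
move=> [h ->]; exists (fun i => a * h i).
by rewrite mulr_sumr; apply: eq_bigr => i _; rewrite mulrA.
Qed.

Lemma in_idealB r k p1 p2 :
  in_ideal r k p1 -> in_ideal r k p2 -> in_ideal r k (p1 - p2).
Proof. by move=> I1 /(in_idealMl (-1)); rewrite mulN1r; apply: in_idealD. Qed.

Definition regular_at r (k : 'I_n) :=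
  forall p, in_ideal r k (p * r k) -> in_ideal r k p.

Definition regular r := forall k, regular_at r k.

Definition koszul r f :=
  exists C : 'I_n -> 'I_n -> T, forall l, f l = \sum_j (C l j - C j l) * r j.

Lemma eq_koszul r f g : f =1 g -> koszul r f -> koszul r g.
Proof. by move=> fg [C f_def]; exists C => l; rewrite -fg. Qed.

Lemma koszulB r f g :
  koszul r f -> koszul r g -> koszul r (fun l => f l - g l).
Proof.
move=> [C1 f_def] [C2 g_def]; exists (fun i j => C1 i j - C2 i j) => l.
by rewrite f_def g_def -sumrB; apply: eq_bigr => j _; ring.
Qed.

Lemma koszul_syzygy r f : koszul r f -> \sum_l f l * r l = 0.
Proof.
move=> [C f_def].
transitivity (\sum_l \sum_j C l j * r j * r l
               - \sum_l \sum_j C j l * r j * r l).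
  rewrite -sumrB; apply: eq_bigr => l _; rewrite f_def mulr_suml -sumrB.
  by apply: eq_bigr => j _; ring.
rewrite [X in _ - X]exchange_big /=; apply/eqP; rewrite subr_eq0; apply/eqP.
by apply: eq_bigr => i _; apply: eq_bigr => j _; ring.
Qed.

Lemma syzygy_last_in_ideal r f (k : 'I_n) :
  (forall l : 'I_n, (k < l)%N -> f l = 0) -> \sum_l f l * r l = 0 ->
  in_ideal r k (f k * r k).
Proof.
move=> f_hi syz_f; exists (fun l => - f l); under eq_bigr do rewrite mulNr.
rewrite sumrN; apply/eqP; rewrite -addr_eq0 addrC; apply/eqP/(etrans _ syz_f).
rewrite [RHS](bigID (fun l : 'I_n => (l < k)%N)) /=; congr (_ + _).
rewrite (bigD1 k) ?ltnn //= big1 ?addr0 // => l /andP [ge_kl ne_lk].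
rewrite -val_eqE /= in ne_lk.
by rewrite f_hi ?mul0r //; lia.
Qed.

Lemma regular_syzygy_koszul r f :
  regular r -> \sum_l f l * r l = 0 -> koszul r f.
Proof.
move=> reg_r; suff koszul_below k : (k <= n)%N -> forall f,
    (forall l : 'I_n, (k <= l)%N -> f l = 0) ->
    \sum_l f l * r l = 0 -> koszul r f.
  by apply: (koszul_below n) => // l; rewrite leqNgt ltn_ord.
elim: k => [|k IHk] le_kn {}f f_hi syz_f.
  exists (fun _ _ => 0) => l; rewrite f_hi //.
  by rewrite big1 // => j _; rewrite subrr mul0r.
pose kk : 'I_n := Ordinal le_kn.
have [g fkk_def] := reg_r kk _ (@syzygy_last_in_ideal r f kk f_hi syz_f).
(* [h] is the Koszul combination of the [S_{i,kk}], i < k, with coefficients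
   [g i]; it cancels the [kk]-th coordinate of [f]. *)
pose C (i j : 'I_n) : T := if (i < k)%N && (j == kk) then g i else 0.
pose h l := \sum_j (C l j - C j l) * r j.
have h_above (l : 'I_n) : (k <= l)%N -> h l = - ((l == kk)%:R * f kk).
  move=> le_kl.
  transitivity (- \sum_(j < n) if (j < k)%N && (l == kk) then g j * r j else 0).
    rewrite -sumrN; apply: eq_bigr => j _; rewrite /C ltnNge le_kl /=.
    by case: ifP => _; rewrite ?sub0r ?mulNr ?mul0r ?oppr0.
  case: (eqVneq l kk) => _.
    rewrite mul1r fkk_def; congr (- _); rewrite [RHS]big_mkcond.
    by apply: eq_bigr => j _; rewrite andbT.
  by rewrite big1 ?mul0r ?oppr0 // => j _; rewrite andbF.
have kos_h : koszul r h by exists C.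
have kos_fh : koszul r (fun l => f l + h l).
  apply: IHk => [|l le_kl|]; first exact: ltnW.
    rewrite h_above //.
    case: (eqVneq l kk) => [->|ne_lkk]; first by rewrite mul1r subrr.
    rewrite -val_eqE /= in ne_lkk.
    by rewrite mul0r oppr0 addr0 f_hi //; lia.
  under eq_bigr do rewrite mulrDl.
  by rewrite big_split /= syz_f koszul_syzygy ?add0r.
by apply: eq_koszul (koszulB kos_fh kos_h) => l; rewrite addrK.
Qed.

Lemma koszul_mul q r (A : 'I_n -> 'I_n -> T) g :
  (forall j, r j = \sum_i q i * A i j) -> koszul r g ->
  koszul q (fun l => \sum_j A l j * g j).
Proof.
move=> r_def [C g_def].
exists (fun l i => \sum_j \sum_m A l j * C j m * A i m) => l.
transitivity (\sum_i \sum_j \sum_m A l j * (C j m - C m j) * A i m * q i).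
  rewrite exchange_big; apply: eq_bigr => j _ /=.
  rewrite g_def mulr_sumr exchange_big; apply: eq_bigr => m _ /=.
  by rewrite r_def !mulr_sumr; apply: eq_bigr => i _; ring.
apply: eq_bigr => i _; rewrite [X in _ - X]exchange_big /= -sumrB mulr_suml.
by apply: eq_bigr => j _; rewrite -sumrB mulr_suml; apply: eq_bigr => m _; ring.
Qed.

Lemma sum_delta (F : 'I_n -> T) i : \sum_j (i == j)%:R * F j = F i.
Proof.
rewrite (bigD1 i) //= eqxx mul1r big1 ?addr0 // => j.
by rewrite eq_sym => /negPf ->; rewrite mul0r.
Qed.

Lemma inverse_regular_syzygy_koszul q (A B : 'I_n -> 'I_n -> T) f :
  (forall i j, \sum_k A i k * B k j = (i == j)%:R) ->
  regular (fun j => \sum_i q i * A i j) ->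
  \sum_i f i * q i = 0 -> koszul q f.
Proof.
move=> AB; set r := fun j => _ => reg_r syz_f.
have q_def l : q l = \sum_j r j * B j l.
  under eq_bigr => j _ do rewrite mulr_suml.
  rewrite exchange_big -[LHS]sum_delta; apply: eq_bigr => i _.
  by rewrite eq_sym -AB mulr_suml; apply: eq_bigr => j _; ring.
pose g j := \sum_l B j l * f l.
have syz_g : \sum_j g j * r j = 0.
  apply: etrans syz_f; under eq_bigr => j _ do rewrite mulr_suml.
  rewrite exchange_big; apply: eq_bigr => l _ /=.
  by rewrite q_def mulr_sumr; apply: eq_bigr => j _; ring.
have kos_g := regular_syzygy_koszul reg_r syz_g.
apply: eq_koszul (koszul_mul (fun j => erefl (r j)) kos_g) => l.
under eq_bigr => j _ do rewrite mulr_sumr.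
rewrite exchange_big -[RHS]sum_delta; apply: eq_bigr => m _.
by rewrite -AB mulr_suml; apply: eq_bigr => j _; ring.
Qed.

End Koszul.

Section FgliftMorphism.
Variables (R : comNzRingType) (n : nat) (M : lmodType R) (G : 'rV[int]_n -> M).

HB.instance Definition _ :=
  GRing.isZmodMorphism.Build (laurent R n) M (fglift G) (lift_is_additive G).

End FgliftMorphism.

Section LaurentRing.
Variables (R : comNzRingType) (n : nat).
Local Notation L := (laurent R n).
Local Notation E := 'rV[int]_n.

Lemma fgliftE (M : lmodType R) (G : E -> M) (p : L) :
  fglift G p = \sum_(e <- dom p) coeff e p *: G e.
Proof.
by rewrite -{1}[p]freeg_sumE raddf_sum; apply: eq_bigr => e _; exact: liftU.
Qed.

Lemma lmulU a b (e f : E) :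
  lmul << a *g e >> << b *g f >> = << a * b *g (e + f) >> :> L.
Proof.
rewrite /lmul !liftU /lmono scalerA.
by apply/eqP/freeg_eqP => x; rewrite coeffZ !coeffU mul1r.
Qed.

Lemma lmulDl (p1 p2 q : L) : lmul (p1 + p2) q = lmul p1 q + lmul p2 q.
Proof. by rewrite /lmul raddfD. Qed.

Lemma lmulDr (p q1 q2 : L) : lmul p (q1 + q2) = lmul p q1 + lmul p q2.
Proof.
rewrite /lmul !fgliftE -big_split.
by apply: eq_bigr => e _; rewrite raddfD scalerDr.
Qed.

Lemma lmul0l (q : L) : lmul 0 q = 0.
Proof. by rewrite /lmul raddf0. Qed.

Lemma lmul0r (p : L) : lmul p 0 = 0.
Proof. by rewrite /lmul fgliftE big1 // => e _; rewrite raddf0 scaler0. Qed.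

Lemma lmulC (p q : L) : lmul p q = lmul q p.
Proof.
elim/freeg_ind_dom0: p q => [|a e p _ _ IHp] q; first by rewrite lmul0l lmul0r.
rewrite lmulDl lmulDr IHp; congr (_ + _).
elim/freeg_ind_dom0: q => [|b f q _ _ IHq]; first by rewrite lmul0l lmul0r.
by rewrite lmulDl lmulDr IHq !lmulU mulrC [e + f]addrC.
Qed.

Lemma lmulA (p q s : L) : lmul p (lmul q s) = lmul (lmul p q) s.
Proof.
elim/freeg_ind_dom0: p q s => [|a e p _ _ IHp] q s; first by rewrite !lmul0l.
rewrite !lmulDl IHp; congr (_ + _).
elim/freeg_ind_dom0: q s => [|b f q _ _ IHq] s.
  by rewrite lmul0l !lmul0r lmul0l.
rewrite !lmulDl !lmulDr !lmulDl IHq; congr (_ + _).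
elim/freeg_ind_dom0: s => [|c g s _ _ IHs]; first by rewrite !lmul0r.
by rewrite !lmulDr IHs !lmulU mulrA addrA.
Qed.

Lemma lmul1l (p : L) : lmul (lone R n) p = p.
Proof.
elim/freeg_ind_dom0: p => [|a e p _ _ IHp]; first by rewrite lmul0r.
by rewrite lmulDr IHp /lone /lmono lmulU mul1r add0r.
Qed.

Lemma lone_neq0 : lone R n != 0 :> L.
Proof. by rewrite /lone /lmono freegU_eq0 oner_neq0. Qed.

End LaurentRing.

HB.instance Definition _ (R : comNzRingType) (n : nat) :=
  GRing.Lmodule.on (laurent R n).
HB.instance Definition _ (R : comNzRingType) (n : nat) :=
  GRing.Zmodule_isComNzRing.Build (laurent R n)
    (@lmulA R n) (@lmulC R n) (@lmul1l R n) (@lmulDl R n) (@lone_neq0 R n).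

Section LaurentCoeff.
Variables (R : comNzRingType) (n : nat).
Local Notation L := (laurent R n).
Local Notation E := 'rV[int]_n.
Implicit Types (p q s : L) (x e f d : E).

Lemma lmulE p q : lmul p q = p * q. Proof. by []. Qed.

Lemma lmonoM d f : lmono R d * lmono R f = lmono R (d + f) :> L.
Proof. by rewrite -lmulE /lmono lmulU mulr1. Qed.

Lemma lmono0 : lmono R 0 = 1 :> L. Proof. by []. Qed.

Lemma coeff_lmono d x : coeff x (lmono R d : L) = (d == x)%:R.
Proof. by rewrite /lmono coeffU mul1r. Qed.

Lemma coeff_dom p x : coeff x p = \sum_(e <- dom p) coeff e p * (e == x)%:R.
Proof.
rewrite -{1}[p]freeg_sumE raddf_sum /=.
by apply: eq_bigr => e _; rewrite coeffU.
Qed.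

Lemma coeffM p q x :
  coeff x (p * q) = \sum_(e <- dom p) coeff e p * coeff (x - e) q.
Proof.
rewrite -lmulE /lmul fgliftE raddf_sum; apply: eq_bigr => e _.
rewrite /= coeffZ fgliftE raddf_sum (coeff_dom q); congr (_ * _).
apply: eq_bigr => f _; rewrite /= coeffZ coeff_lmono.
by rewrite [f == _]eq_sym subr_eq [f + e]addrC eq_sym.
Qed.

Lemma coeffM_neq0 p q x : coeff x (p * q) != 0 ->
  exists e f, [/\ coeff e p != 0, coeff f q != 0 & x = e + f].
Proof.
rewrite coeffM; elim: (dom p) => [|e s IHs]; first by rewrite big_nil eqxx.
rewrite big_cons; have [->|nz] := eqVneq (coeff e p * coeff (x - e) q) 0.
  by rewrite add0r.
move=> _; exists e, (x - e); rewrite [e + _]addrC subrK; split=> //.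
  by apply: contraNneq nz => ->; rewrite mul0r.
by apply: contraNneq nz => ->; rewrite mulr0.
Qed.

Definition lfilter (P : pred E) p : L :=
  \sum_(e <- dom p | P e) << coeff e p *g e >>.

Lemma coeff_lfilter (P : pred E) p x :
  coeff x (lfilter P p) = if P x then coeff x p else 0.
Proof.
rewrite raddf_sum /= big_mkcond /= (coeff_dom p); case Px: (P x).
  apply: eq_bigr => e _; rewrite coeffU.
  by case: (eqVneq e x) => [->|_]; rewrite ?Px ?mulr0 ?if_same.
rewrite big1 // => e _; rewrite coeffU.
by case: (eqVneq e x) => [->|_]; rewrite ?Px ?mulr0 ?if_same.
Qed.

Lemma lfilter_is_zmod_morphism (P : pred E) : zmod_morphism (lfilter P).
Proof.
move=> p q; apply/eqP/freeg_eqP => x.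
by rewrite coeffB !coeff_lfilter coeffB; case: (P x); rewrite ?subr0.
Qed.

Lemma lfilter_id (P : pred E) p :
  (forall x, coeff x p != 0 -> P x) -> lfilter P p = p.
Proof.
move=> supp_P; apply/eqP/freeg_eqP => x; rewrite coeff_lfilter.
by case: ifP => // Px; apply/esym/eqP; apply: contraFT Px; exact: supp_P.
Qed.

Lemma lfilter_eq0 (P : pred E) p :
  (forall x, coeff x p != 0 -> ~~ P x) -> lfilter P p = 0.
Proof.
move=> supp_nP; apply/eqP/freeg_eqP => x; rewrite coeff_lfilter coeff0.
by case: ifP => // Px; apply/eqP; apply: contraTT Px; exact: supp_nP.
Qed.

End LaurentCoeff.

HB.instance Definition _ (R : comNzRingType) (n : nat) (P : pred 'rV[int]_n) :=
  GRing.isZmodMorphism.Build (laurent R n) (laurent R n) (lfilter P)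
    (lfilter_is_zmod_morphism P).

Section LaurentFilterMul.
Variables (R : comNzRingType) (n : nat).
Local Notation L := (laurent R n).
Local Notation E := 'rV[int]_n.
Implicit Types (p q s : L) (x e f d : E).

Lemma lfilterM_id (P : pred E) p s :
  (forall e f, coeff e p != 0 -> coeff f s != 0 -> P (e + f)) ->
  lfilter P (p * s) = p * s.
Proof.
move=> PM; apply: lfilter_id => x /coeffM_neq0 [e [f [pe sf ->]]]; exact: PM.
Qed.

Lemma lfilterM_eq0 (P : pred E) p s :
  (forall e f, coeff e p != 0 -> coeff f s != 0 -> ~~ P (e + f)) ->
  lfilter P (p * s) = 0.
Proof.
move=> nPM; apply: lfilter_eq0 => x /coeffM_neq0 [e [f [pe sf ->]]]; exact: nPM.
Qed.

Lemma lfilterM (P : pred E) p s :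
  (forall e f, coeff f s != 0 -> P (e + f) = P e) ->
  lfilter P (p * s) = lfilter P p * s.
Proof.
move=> P_inv; have p_split : p = lfilter P p + lfilter (predC P) p.
  apply/eqP/freeg_eqP => x; rewrite coeffD !coeff_lfilter /=.
  by case: (P x); rewrite ?addr0 ?add0r.
rewrite {1}p_split mulrDl raddfD /= lfilterM_id ?lfilterM_eq0 ?addr0 // => e f.
all: move=> nz sf; rewrite P_inv //; move: nz; rewrite coeff_lfilter /=.
all: by case: (P e) => /=; rewrite ?eqxx.
Qed.

End LaurentFilterMul.

Lemma size_dom_subr_lfilter (R : comNzRingType) (n : nat) (P : pred 'rV[int]_n)
    (g : laurent R n) e0 :
  e0 \in dom g -> P e0 -> (size (dom (g - lfilter P g)%R) < size (dom g))%N.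
Proof.
move=> e0_g P_e0.
have sub : {subset dom (g - lfilter P g) <= rem e0 (dom g)}.
  move=> x; rewrite (mem_rem_uniq _ (uniq_dom g)) inE !mem_dom.
  rewrite coeffB coeff_lfilter.
  case: (eqVneq x e0) => [->|_] /=; first by rewrite P_e0 subrr eqxx.
  by case: (P x); rewrite ?subrr ?eqxx // subr0.
apply: leq_ltn_trans (uniq_leq_size (uniq_dom _) sub) _.
by rewrite size_rem // ltn_predL; case: (dom g) e0_g.
Qed.

Section FlatRegular.
Variables (R : comNzRingType) (n : nat).
Local Notation L := (laurent R n).
Local Notation E := 'rV[int]_n.
Implicit Types (p g : L) (e f v : E).

Definition agree_from (m : nat) (e f : E) : bool :=
  [forall j : 'I_n, (m <= j)%N ==> (e 0 j == f 0 j)].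

Lemma agree_fromP m e f :
  reflect (forall j : 'I_n, (m <= j)%N -> e 0 j = f 0 j) (agree_from m e f).
Proof.
apply: (iffP forallP) => [agree_ef j le_mj | agree_ef j].
  by apply/eqP; apply: (implyP (agree_ef j)).
by apply/implyP => le_mj; apply/eqP; apply: agree_ef.
Qed.

Lemma agree_from_addr m e f v : (forall j : 'I_n, (m <= j)%N -> f 0 j = 0) ->
  agree_from m (e + f) v = agree_from m e v.
Proof.
move=> f_hi; apply: eq_forallb => j; case: (leqP m j) => //= le_mj.
by rewrite mxE f_hi // addr0.
Qed.

Lemma in_ideal_lfilter (r : 'I_n -> L) (k : nat) v p :
  (forall i : 'I_n, (i < k)%N -> in_sub i.+1 (r i)) ->
  in_ideal r k p -> in_ideal r k (lfilter (fun e => agree_from k e v) p).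
Proof.
move=> r_low [h ->].
exists (fun i => lfilter (fun e => agree_from k e v) (h i)).
rewrite raddf_sum; apply: eq_bigr => i lt_ik; apply: lfilterM => e f rf.
apply: agree_from_addr => j le_kj.
exact: r_low lt_ik f rf j (leq_trans lt_ik le_kj).
Qed.

Variables (r : 'I_n -> L) (k : 'I_n) (a : int) (d : E).
Hypotheses (r_low : forall i : 'I_n, (i < k)%N -> in_sub i.+1 (r i))
           (rk_sub : in_sub k.+1 (r k))
           (d_k : d 0 k = a) (d_hi : forall j : 'I_n, (k < j)%N -> d 0 j = 0)
           (rk_ge : forall e, coeff e (r k) != 0 -> a <= e 0 k)
           (rk_lead : forall e, e 0 k = a -> coeff e (r k) = (e == d)%:R).

Lemma lowest_component g e0 : (forall e, coeff e g != 0 -> e0 0 k <= e 0 k) ->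
  lfilter (fun e => agree_from k e (e0 + d)) (g * r k)
  = lfilter (fun e => agree_from k e e0) g * lmono R d.
Proof.
move=> e0_min; set c := lfilter _ g.
(* Only [c * x^d] contributes: [r k - x^d] has x_k-degree > a, and [e0]
   minimises the x_k-degree on the support of [g]. *)
have -> : g * r k = c * lmono R d + c * (r k - lmono R d) + (g - c) * r k.
  by ring.
rewrite !raddfD /= lfilterM_id => [|e f]; last first.
  rewrite coeff_lfilter coeff_lmono.
  case: ifP => [/agree_fromP e_e0 _|]; last by rewrite eqxx.
  case: (eqVneq d f) => [<- _|]; last by rewrite eqxx.
  by apply/agree_fromP => j le_kj; rewrite !mxE e_e0.
rewrite lfilterM_eq0 => [|e f]; last first.
  rewrite coeff_lfilter.
  case: ifP => [/agree_fromP e_e0 _|]; last by rewrite eqxx.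
  rewrite coeffB coeff_lmono => nz; apply/agree_fromP => /(_ k (leqnn k)).
  rewrite !mxE e_e0 // d_k.
  by move/addrI => fk_a; move: nz; rewrite rk_lead // [d == f]eq_sym subrr eqxx.
rewrite lfilterM_eq0 ?addr0 // => e f.
rewrite coeffB coeff_lfilter.
case: ifP => [_|e_e0]; first by rewrite subrr eqxx.
rewrite subr0 => ge rf; apply: contraFN e_e0 => /agree_fromP ef_e0d.
apply/agree_fromP => j le_kj; have := ef_e0d j le_kj; rewrite !mxE.
case: (ltnP k j) => [lt_kj|le_jk].
  by rewrite (rk_sub rf lt_kj) (d_hi lt_kj) !addr0.
have -> : j = k by apply/val_inj/eqP; rewrite eqn_leq le_jk le_kj.
have := e0_min e ge; have := rk_ge rf; rewrite d_k.
move: (e 0 k) (f 0 k) (e0 0 k) => x y z; lia.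
Qed.

Lemma divisor_regular_at : regular_at r k.
Proof.
move=> g; have [N] := ubnP (size (dom g)); elim: N g => // N IHN g lt_gN g_in.
have [->|g_nz] := eqVneq g 0; first exact: in_ideal0.
have [e0 e0_g e0_min] :
    exists2 e0, e0 \in dom g & forall e, e \in dom g -> e0 0 k <= e 0 k.
  by apply: seq_argmin; rewrite dom_eq0.
set c := lfilter (fun e => agree_from k e e0) g.
have c_in : in_ideal r k c.
  have : in_ideal r k (c * lmono R d).
    rewrite -lowest_component => [|e]; last by rewrite -mem_dom; apply: e0_min.
    exact: in_ideal_lfilter.
  move/(in_idealMl (lmono R (- d))).
  by rewrite mulrCA lmonoM addNr lmono0 mulr1.
have gc_in : in_ideal r k (g - c).
  apply: IHN.
    apply: leq_trans (size_dom_subr_lfilter e0_g _) _ => //.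
    exact/agree_fromP.
  by rewrite mulrBl; apply: in_idealB g_in _; rewrite mulrC; apply: in_idealMl.
by rewrite -(subrK c g); apply: in_idealD.
Qed.

End FlatRegular.

Lemma flat_regular (R : comNzRingType) (n : nat) (r : 'I_n -> laurent R n) :
  flat r -> regular r.
Proof.
move=> r_flat k; have [rk_sub [a [d [d_k d_hi rk_ge rk_lead]]]] := r_flat k.
apply: (divisor_regular_at _ rk_sub d_k d_hi rk_ge rk_lead) => i _.
by case: (r_flat i).
Qed.

Lemma koszul_trivial_syzygy (R : comNzRingType) (n : nat)
    (q f : 'I_n -> laurent R n) :
  koszul q f -> trivial_syzygy q f.
Proof.
case=> C f_def; exists C => l; rewrite f_def (bigD1 l) //= subrr mul0r add0r.
under [RHS]eq_bigr => i _ do under eq_bigr => j _ do rewrite lmulE.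
rewrite [in RHS](bigD1 l) //=.
rewrite [X in X + _](eq_bigr (fun j => C l j * q j)) => [|j _]; last first.
  by rewrite /Svec eqxx.
rewrite [X in _ + X](eq_bigr (fun i => - (C i l * q i))) => [|i ne_il].
  rewrite sumrN; under eq_bigr do rewrite mulrBl.
  by rewrite sumrB; congr (_ - _); apply: eq_bigl => j; rewrite eq_sym.
rewrite (bigD1 l) //= [X in _ + X]big1 => [|j /andP [_ ne_jl]]; last first.
  by rewrite /Svec ![l == _]eq_sym (negPf ne_il) (negPf ne_jl) mulr0.
by rewrite /Svec [l == i]eq_sym (negPf ne_il) eqxx addr0 mulrN.
Qed.

Lemma gen_flat_syzygy_trivial (R : comNzRingType) (n : nat)
    (q f : 'I_n -> laurent R n) :
  gen_flat q -> syzygy q f -> trivial_syzygy q f.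
Proof.
case=> A [B [AB flat_qA]] syz_f; apply/koszul_trivial_syzygy.
apply: (@inverse_regular_syzygy_koszul _ _ q A B) => //.
  by move=> i j; have [-> _] := AB i j; case: (i == j).
exact: flat_regular.
Qed.

Theorem lemma2p10 :
  (forall (n : nat) (q : 'I_n -> laurent int n),
      gen_flat q -> forall f, syzygy q f -> trivial_syzygy q f) /\
  (forall (m : nat), (1 < m)%N ->
    forall (n : nat) (q : 'I_n -> laurent 'Z_m n),
      gen_flat q -> forall f, syzygy q f -> trivial_syzygy q f).
Proof.
split=> [n q|m _ n q] q_flat f; exact: gen_flat_syzygy_trivial.
Qed.
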